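(* Let $\mathbf a=\{a_k\}_{k\ge0}$ with $\operatorname{Im}a_k>0$ have no limit points on the real axis $\mathbb R$, satisfy $\lim_{n\to\infty}\sigma_n=+\infty$, and satisfy $\varsigma_n/\sigma_n\le C$ for all $n\ge1$ with a constant $C$. Then for every $\delta>0$ and every $x\in\mathbb R$, $$\lim_{n\to\infty}\int_0^\delta\frac{\sin\big(y\,\mu_n(y;x)\big)}{y}\,dy=\frac\pi2\quad\text{and}\quad\lim_{n\to\infty}\int_0^\delta\frac{\sin\big(y\,\mu_n(-y;x)\big)}{y}\,dy=\frac\pi2.$$
   Context: For $y\ne0$, $x\in\mathbb R$: $\mu_n(y;x):=\frac1y\int_x^{x+y}\sum_{k=0}^{n-1}\frac{2\operatorname{Im}a_k}{(u-\operatorname{Re}a_k)^2+(\operatorname{Im}a_k)^2}\,du$. $\sigma_n:=\sum_{k=0}^{n-1}\frac{|\operatorname{Im}a_k|}{1+|a_k|^2}$, $\varsigma_n:=\sum_{k=0}^{n-1}\frac{1}{(\operatorname{Im}a_k)^2}$. ''No limit points on $\mathbb R$'' means no subsequence of $\{a_k\}$ converges to a real number. *)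

From Stdlib Require Import Reals Lra ClassicalEpsilon.
Open Scope R_scope.

(* Total Riemann integral: the (signed) Riemann integral of f from a to b
   when f is Riemann integrable there, and 0 otherwise. *)
Definition Rint (f : R -> R) (a b : R) : R :=
  match excluded_middle_informative (exists pr : Riemann_integrable f a b, True) with
  | left H => RiemannInt (proj1_sig (constructive_indefinite_description _ H))
  | right _ => 0
  end.

Fixpoint psum (f : nat -> R) (n : nat) : R :=
  match n with
  | O => 0
  | S m => psum f m + f m
  end.

(* The sequence a_k is given by its real parts re k and imaginary parts im k. *)

Definition mu_n (re im : nat -> R) (n : nat) (y x : R) : R :=
  / y * Rint (fun u => psum (fun k => 2 * im k / ((u - re k) ^ 2 + (im k) ^ 2)) n)
             x (x + y).

Definition sigma_n (re im : nat -> R) (n : nat) : R :=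
  psum (fun k => Rabs (im k) / (1 + (re k ^ 2 + im k ^ 2))) n.

Definition varsigma_n (im : nat -> R) (n : nat) : R :=
  psum (fun k => / (im k ^ 2)) n.

Definition no_real_limit_points (re im : nat -> R) : Prop :=
  forall (phi : nat -> nat) (r : R),
    (forall j, (phi j < phi (S j))%nat) ->
    ~ (Un_cv (fun j => re (phi j)) r /\ Un_cv (fun j => im (phi j)) 0).

From Stdlib Require Import Reals Lra Lia ClassicalEpsilon.
From Coquelicot Require Import Coquelicot.
Open Scope R_scope.

(* Write [y * mu_n(c y; x) = G y := int_0^y g] with [g s = sum_k P_k (x + c s)], a sum of
   Poisson kernels.  On [[0, delta]] one has [g >= 2 sigma_n / K], where
   [K = 2 (|x| + |c| delta)^2 + 2], and [|g'| <= 2 |c| varsigma_n <= 2 |c| C sigma_n]; hence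
   [|g'| <= M g] with [M] independent of [n], while [g 0 -> oo].  For any such [g],
   [int_0^delta sin (G y) / y dy] is [pi/2] up to [eps M (1 + M delta) + O_eps (1 / g 0)]:
   on [[0, eps]] the integrand is close to [sinc (G y) G'(y)], whose integral is [Si (G eps)],
   and [|Si X - pi/2| <= 2 / X]; on [[eps, delta]] one integrates by parts against
   [-cos G / (y g)].  Letting [n -> oo] and then [eps -> 0] gives the limit. *)

Lemma continuous_of_ex_derive (f : R -> R) x : ex_derive f x -> continuous f x.
Proof. exact (ex_derive_continuous f x). Qed.

Lemma ex_RInt_continuous_R (f : R -> R) a b :
  (forall z, Rmin a b <= z <= Rmax a b -> continuous f z) -> ex_RInt f a b.
Proof. exact (ex_RInt_continuous (V := R_CompleteNormedModule) f a b). Qed.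

Lemma RInt_derive_R (f df : R -> R) a b :
  (forall x, Rmin a b <= x <= Rmax a b -> is_derive f x (df x)) ->
  (forall x, Rmin a b <= x <= Rmax a b -> continuous df x) ->
  RInt df a b = f b - f a.
Proof.
  intros Hd Hc. apply (is_RInt_unique (V := R_CompleteNormedModule)).
  exact (is_RInt_derive (V := R_CompleteNormedModule) f df a b Hd Hc).
Qed.

Lemma RInt_minus_R (f g : R -> R) a b : ex_RInt f a b -> ex_RInt g a b ->
  RInt (fun x => f x - g x) a b = RInt f a b - RInt g a b.
Proof. exact (RInt_minus (V := R_CompleteNormedModule) f g a b). Qed.

Lemma ex_RInt_minus_R (f g : R -> R) a b : ex_RInt f a b -> ex_RInt g a b ->
  ex_RInt (fun x => f x - g x) a b.
Proof. exact (ex_RInt_minus (V := R_NormedModule) f g a b). Qed.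

Lemma is_derive_comp_R (f g : R -> R) x df dg :
  is_derive f (g x) df -> is_derive g x dg -> is_derive (fun y => f (g y)) x (dg * df).
Proof. exact (is_derive_comp (K := R_AbsRing) (V := R_NormedModule) f g x df dg). Qed.

Lemma is_derive_mult_R (f g : R -> R) x df dg :
  is_derive f x df -> is_derive g x dg ->
  is_derive (fun y => f y * g y) x (df * g x + f x * dg).
Proof. intros; apply (is_derive_mult (K := R_AbsRing)); auto. intros; apply Rmult_comm. Qed.

Lemma continuous_mult_R (f g : R -> R) x :
  continuous f x -> continuous g x -> continuous (fun y => f y * g y) x.
Proof. exact (continuous_mult (K := R_AbsRing) f g x). Qed.

Lemma continuous_plus_R (f g : R -> R) x :
  continuous f x -> continuous g x -> continuous (fun y => f y + g y) x.
Proof. exact (continuous_plus (K := R_AbsRing) (V := R_NormedModule) f g x). Qed.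

Lemma continuous_comp_R (f g : R -> R) x :
  continuous f x -> continuous g (f x) -> continuous (fun y => g (f y)) x.
Proof.
  exact (continuous_comp (U := R_UniformSpace) (V := R_UniformSpace) (W := R_UniformSpace) f g x).
Qed.

Lemma is_derive_RInt_from_0 (g : R -> R) y :
  (forall z, continuous g z) -> is_derive (fun z => RInt g 0 z) y (g y).
Proof.
  intros Hg. apply (is_derive_RInt (V := R_NormedModule) g (fun z => RInt g 0 z) 0 y).
  - exists (mkposreal 1 Rlt_0_1). intros b _.
    apply (RInt_correct (V := R_CompleteNormedModule)), ex_RInt_continuous_R; auto.
  - apply Hg.
Qed.

Lemma Rabs_RInt_le_RInt (f g : R -> R) a b : a <= b -> ex_RInt f a b -> ex_RInt g a b ->
  (forall t, a < t < b -> Rabs (f t) <= g t) -> Rabs (RInt f a b) <= RInt g a b.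
Proof.
  intros Hab Hf Hg H. eapply Rle_trans; [exact (abs_RInt_le f a b Hab Hf)|].
  apply RInt_le; auto.
  apply ex_RInt_norm in Hf; exact Hf.
Qed.

Lemma Rabs_sub_le_derive_bound (f df : R -> R) a b L :
  (forall x, is_derive f x (df x)) ->
  (forall x, Rmin a b <= x <= Rmax a b -> Rabs (df x) <= L) ->
  Rabs (f b - f a) <= L * Rabs (b - a).
Proof.
  intros Hd HL.
  destruct (MVT_gen f a b df) as [c [Hc ->]].
  - intros x _. apply Hd.
  - intros x _. apply derivable_continuous_pt. eexists. apply is_derive_Reals, Hd.
  - rewrite Rabs_mult. apply Rmult_le_compat_r; [apply Rabs_pos|apply HL, Hc].
Qed.

Lemma RInt_point_R (f : R -> R) a : RInt f a a = 0.
Proof. exact (RInt_point a f). Qed.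

Lemma RInt_const_R a b c : RInt (fun _ => c) a b = (b - a) * c.
Proof. exact (RInt_const a b c). Qed.

(* Quotients such as [sin t / t] are made continuous at [0] by giving them their limit [L]
   there; otherwise Rocq's [t / 0 = 0] would break the continuity needed by [RInt]. *)
Definition quot0 (h : R -> R) (L y : R) : R := if Req_EM_T y 0 then L else h y / y.

Lemma mult_quot0 h L t : h 0 = 0 -> t * quot0 h L t = h t.
Proof.
  intros h0. unfold quot0. destruct (Req_EM_T t 0) as [->|Ht]; [rewrite h0; ring|].
  field; exact Ht.
Qed.

Lemma continuous_quot0 (h : R -> R) L y :
  (forall z, ex_derive h z) -> h 0 = 0 -> is_derive h 0 L -> continuous (quot0 h L) y.
Proof.
  intros Hh h0 HL. destruct (Req_EM_T y 0) as [->|Hy].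
  - apply continuity_pt_filterlim. intros eps Heps.
    apply is_derive_Reals in HL. destruct (HL eps Heps) as [d Hd].
    exists d. split; [apply cond_pos|]. intros z [[_ Hz0] Hz].
    unfold dist in Hz |- *; simpl in Hz |- *. unfold R_dist in Hz |- *. rewrite Rminus_0_r in Hz.
    specialize (Hd z (not_eq_sym Hz0) Hz). rewrite Rplus_0_l, h0, Rminus_0_r in Hd.
    unfold quot0. destruct (Req_EM_T z 0) as [E|_]; [exfalso; exact (Hz0 (eq_sym E))|].
    destruct (Req_EM_T 0 0) as [_|]; [exact Hd|contradiction].
  - apply continuous_ext_loc with (g := fun z => h z * / z).
    + assert (Hp : 0 < Rabs y) by (apply Rabs_pos_lt; exact Hy).
      exists (mkposreal _ Hp). intros z Hz. unfold quot0.
      destruct (Req_EM_T z 0) as [->|]; [|reflexivity].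
      change (Rabs (0 - y) < Rabs y) in Hz. rewrite Rminus_0_l, Rabs_Ropp in Hz. lra.
    + apply continuous_mult_R; [apply continuous_of_ex_derive, Hh|].
      apply continuous_Rinv, Hy.
Qed.

Definition sinc : R -> R := quot0 sin 1.

Lemma mult_sinc t : t * sinc t = sin t.
Proof. exact (mult_quot0 sin 1 t sin_0). Qed.

Lemma continuous_sinc t : continuous sinc t.
Proof.
  apply continuous_quot0; [intros z; eexists; apply is_derive_Reals, derivable_pt_lim_sin|
    exact sin_0|].
  rewrite <- cos_0. apply is_derive_Reals, derivable_pt_lim_sin.
Qed.

Lemma Rabs_sinc_le_1 t : Rabs (sinc t) <= 1.
Proof.
  unfold sinc, quot0. destruct (Req_EM_T t 0) as [_|Ht]; [rewrite Rabs_R1; lra|].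
  assert (Hsin : Rabs (sin t - sin 0) <= 1 * Rabs (t - 0)).
  { apply (Rabs_sub_le_derive_bound sin cos).
    - intros u. apply is_derive_Reals, derivable_pt_lim_sin.
    - intros u _. apply Rabs_le, COS_bound. }
  rewrite sin_0, !Rminus_0_r, Rmult_1_l in Hsin.
  unfold Rdiv. rewrite Rabs_mult, Rabs_inv.
  apply (Rmult_le_reg_r (Rabs t)); [apply Rabs_pos_lt; exact Ht|].
  rewrite Rmult_assoc, Rinv_l, Rmult_1_r, Rmult_1_l; [exact Hsin|].
  apply Rabs_no_R0; exact Ht.
Qed.

Definition damped_sinc (a t : R) : R := exp (- (a * t)) * sinc t.
Definition damped_Si (X a : R) : R := RInt (damped_sinc a) 0 X.
Definition Si (X : R) : R := RInt sinc 0 X.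

Lemma is_derive_damped_sinc_param (a t : R) :
  is_derive (fun b => damped_sinc b t) a (- (exp (- (a * t)) * sin t)).
Proof. unfold damped_sinc. rewrite <- mult_sinc. auto_derive; auto. ring. Qed.

Lemma continuous_damped_sinc a t : continuous (damped_sinc a) t.
Proof.
  apply continuous_mult_R; [|apply continuous_sinc].
  apply continuous_of_ex_derive. auto_derive; auto.
Qed.

Lemma is_derive_damped_Si (X a : R) :
  is_derive (damped_Si X) a ((exp (- (a * X)) * (a * sin X + cos X) - 1) / (1 + a ^ 2)).
Proof.
  assert (Ha : 1 + a ^ 2 <> 0) by (apply Rgt_not_eq; nra).
  assert (E : RInt (fun t => Derive (fun b => damped_sinc b t) a) 0 X
              = (exp (- (a * X)) * (a * sin X + cos X) - 1) / (1 + a ^ 2) :> R).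
  { rewrite (RInt_ext _ (fun t => - (exp (- (a * t)) * sin t))).
    2:{ intros t _. apply is_derive_unique, is_derive_damped_sinc_param. }
    rewrite (RInt_derive_R (fun t => exp (- (a * t)) * (a * sin t + cos t) / (1 + a ^ 2))).
    - rewrite Rmult_0_r, Ropp_0, exp_0, sin_0, cos_0. field; exact Ha.
    - intros t _. auto_derive; auto. field; nra.
    - intros t _. apply continuous_of_ex_derive. auto_derive; auto. }
  rewrite <- E. apply is_derive_RInt_param.
  - exists (mkposreal 1 Rlt_0_1). intros b _ t _. eexists.
    apply is_derive_damped_sinc_param.
  - intros t _. apply continuity_2d_pt_ext with (f := fun b s => - (exp (- (b * s)) * sin s)).
    { intros b s. symmetry. apply is_derive_unique, is_derive_damped_sinc_param. }
    apply continuity_2d_pt_opp, continuity_2d_pt_mult.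
    + apply continuity_1d_2d_pt_comp.
      { apply derivable_continuous_pt, derivable_pt_exp. }
      apply continuity_2d_pt_opp, continuity_2d_pt_mult;
        [apply continuity_2d_pt_id1|apply continuity_2d_pt_id2].
    + apply continuity_1d_2d_pt_comp; [|apply continuity_2d_pt_id2].
      apply derivable_continuous_pt, derivable_pt_sin.
  - exists (mkposreal 1 Rlt_0_1). intros b _.
    apply ex_RInt_continuous_R. intros; apply continuous_damped_sinc.
Qed.

Lemma damped_Si_0 X : damped_Si X 0 = Si X.
Proof.
  apply RInt_ext. intros t _. unfold damped_sinc.
  rewrite Rmult_0_l, Ropp_0, exp_0. apply Rmult_1_l.
Qed.

Lemma RInt_exp_neg A X : 0 < A ->
  RInt (fun t => exp (- (A * t))) 0 X = (1 - exp (- (A * X))) / A :> R.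
Proof.
  intros HA. rewrite (RInt_derive_R (fun t => - exp (- (A * t)) / A)).
  - rewrite Rmult_0_r, Ropp_0, exp_0. field. lra.
  - intros t _. auto_derive; auto. field. lra.
  - intros t _. apply continuous_of_ex_derive. auto_derive; auto.
Qed.

Lemma ex_RInt_exp_neg A X : ex_RInt (fun t => exp (- (A * t))) 0 X.
Proof.
  apply ex_RInt_continuous_R. intros; apply continuous_of_ex_derive; auto_derive; auto.
Qed.

Lemma Rabs_damped_Si_le X A : 0 < A -> 0 <= X -> Rabs (damped_Si X A) <= 1 / A.
Proof.
  intros HA HX. eapply Rle_trans.
  - apply (Rabs_RInt_le_RInt _ (fun t => exp (- (A * t)))); [exact HX| | |].
    + apply ex_RInt_continuous_R. intros; apply continuous_damped_sinc.
    + apply ex_RInt_exp_neg.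
    + intros t _. unfold damped_sinc.
      rewrite Rabs_mult, (Rabs_pos_eq (exp _)) by (apply Rlt_le, exp_pos).
      generalize (Rabs_sinc_le_1 t) (exp_pos (- (A * t))). nra.
  - rewrite RInt_exp_neg by exact HA. unfold Rdiv.
    apply Rmult_le_compat_r; [apply Rlt_le, Rinv_0_lt_compat; exact HA|].
    generalize (exp_pos (- (A * X))). lra.
Qed.

Lemma Rabs_trig_lin_div_le X a : 0 <= a ->
  Rabs ((a * sin X + cos X) / (1 + a ^ 2)) <= 2.
Proof.
  intros Ha. unfold Rdiv. rewrite Rabs_mult, Rabs_inv, (Rabs_pos_eq (1 + a ^ 2)) by nra.
  apply (Rmult_le_reg_r (1 + a ^ 2)); [nra|].
  rewrite Rmult_assoc, Rinv_l, Rmult_1_r by (apply Rgt_not_eq; nra).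
  eapply Rle_trans; [apply Rabs_triang|]. rewrite Rabs_mult, (Rabs_pos_eq a) by exact Ha.
  assert (Rabs (sin X) <= 1) by apply Rabs_le, SIN_bound.
  assert (Rabs (cos X) <= 1) by apply Rabs_le, COS_bound.
  assert (0 <= Rabs (sin X)) by apply Rabs_pos. nra.
Qed.

(* [damped_Si X A + atan A] is an antiderivative in [A] of a function bounded by [2 exp (-X A)]. *)
Lemma Rabs_damped_Si_atan_sub_Si_le X A : 0 <= A -> 0 < X ->
  Rabs (damped_Si X A + atan A - Si X) <= 2 / X.
Proof.
  intros HA HX.
  set (Q a := exp (- (X * a)) * ((a * sin X + cos X) / (1 + a ^ 2))).
  assert (HQ : RInt Q 0 A = damped_Si X A + atan A - Si X :> R).
  { rewrite (RInt_derive_R (fun a => damped_Si X a + atan a)).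
    - rewrite atan_0, damped_Si_0. ring.
    - intros a _. unfold Q.
      replace (exp (- (X * a)) * ((a * sin X + cos X) / (1 + a ^ 2))) with
        ((exp (- (a * X)) * (a * sin X + cos X) - 1) / (1 + a ^ 2) + / (1 + a ^ 2))
        by (rewrite (Rmult_comm X); field; apply Rgt_not_eq; nra).
      apply (is_derive_plus (K := R_AbsRing) (V := R_NormedModule)).
      + apply is_derive_damped_Si.
      + apply is_derive_Reals, derivable_pt_lim_atan.
    - intros a _. apply continuous_of_ex_derive. unfold Q. auto_derive.
      apply Rgt_not_eq; nra. }
  rewrite <- HQ. eapply Rle_trans.
  - apply (Rabs_RInt_le_RInt _ (fun a => 2 * exp (- (X * a)))); [exact HA| | |].
    + apply ex_RInt_continuous_R. intros; apply continuous_of_ex_derive.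
      unfold Q; auto_derive; apply Rgt_not_eq; nra.
    + apply ex_RInt_continuous_R. intros; apply continuous_of_ex_derive; auto_derive; auto.
    + intros a Ha. unfold Q. rewrite Rabs_mult, (Rabs_pos_eq (exp _)) by (apply Rlt_le, exp_pos).
      rewrite (Rmult_comm 2). apply Rmult_le_compat_l; [apply Rlt_le, exp_pos|].
      apply Rabs_trig_lin_div_le; lra.
  - rewrite (RInt_derive_R (fun a => - 2 * exp (- (X * a)) / X)).
    + rewrite Rmult_0_r, Ropp_0, exp_0.
      assert (He := exp_pos (- (X * A))).
      apply (Rmult_le_reg_r X); [exact HX|]. field_simplify; lra.
    + intros a _. auto_derive; auto. field. lra.
    + intros a _. apply continuous_of_ex_derive. auto_derive; auto.
Qed.

Lemma PI2_sub_atan_le A : 0 < A -> 0 <= PI / 2 - atan A <= 1 / A.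
Proof.
  intros HA. rewrite <- atan_inv by exact HA.
  assert (HiA : 0 < / A) by (apply Rinv_0_lt_compat; exact HA).
  assert (Hlip : Rabs (atan (/ A) - atan 0) <= 1 * Rabs (/ A - 0)).
  { apply (Rabs_sub_le_derive_bound atan (fun x => / (1 + x ^ 2))).
    - intros t. replace (t ^ 2) with (t²) by (unfold Rsqr; ring). apply is_derive_atan.
    - intros t _. rewrite Rabs_pos_eq by (apply Rlt_le, Rinv_0_lt_compat; nra).
      rewrite <- Rinv_1. apply Rinv_le_contravar; [lra|nra]. }
  rewrite atan_0, !Rminus_0_r, Rmult_1_l, (Rabs_pos_eq (/ A)) in Hlip by lra.
  assert (0 < atan (/ A)) by (rewrite <- atan_0; apply atan_increasing; exact HiA).
  apply Rabs_le_between in Hlip. unfold Rdiv. lra.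
Qed.

Lemma Rabs_Si_sub_PI2_le X : 0 < X -> Rabs (Si X - PI / 2) <= 2 / X.
Proof.
  intros HX. apply Rle_plus_epsilon. intros eps Heps.
  set (A := 2 / eps).
  assert (HA : 0 < A) by (apply Rdiv_lt_0_compat; lra).
  assert (HAe : 1 / A = eps / 2) by (unfold A; field; lra).
  assert (H1 := Rabs_damped_Si_le X A HA (Rlt_le _ _ HX)).
  assert (H2 := Rabs_damped_Si_atan_sub_Si_le X A (Rlt_le _ _ HA) HX).
  assert (H3 := PI2_sub_atan_le A HA).
  rewrite HAe in H1, H3.
  apply Rabs_le_between in H1. apply Rabs_le_between in H2.
  apply Rabs_le. lra.
Qed.

Definition sin_prim_quot (g : R -> R) : R -> R := quot0 (fun y => sin (RInt g 0 y)) (g 0).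

Lemma continuous_sin_prim_quot (g : R -> R) y :
  (forall z, continuous g z) -> continuous (sin_prim_quot g) y.
Proof.
  intros Hg.
  assert (HD : forall z, is_derive (fun y => sin (RInt g 0 y)) z (g z * cos (RInt g 0 z))).
  { intros z. apply is_derive_comp_R; [apply is_derive_Reals, derivable_pt_lim_sin|].
    apply is_derive_RInt_from_0, Hg. }
  apply continuous_quot0.
  - intros z. eexists. apply HD.
  - rewrite RInt_point_R. apply sin_0.
  - assert (H0 := HD 0). rewrite RInt_point_R, cos_0, Rmult_1_r in H0. exact H0.
Qed.

Lemma ex_RInt_sin_prim_quot (g : R -> R) a b :
  (forall z, continuous g z) -> ex_RInt (sin_prim_quot g) a b.
Proof. intros Hg. apply ex_RInt_continuous_R. intros; apply continuous_sin_prim_quot, Hg. Qed.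

Section SinPrimitiveQuotient.

Variables (g g' : R -> R) (d M : R).
Hypothesis g_derive : forall y, is_derive g y (g' y).
Hypothesis g'_continuous : forall y, continuous g' y.
Hypothesis d_pos : 0 < d.
Hypothesis M_ge0 : 0 <= M.
Hypothesis g'_bound : forall y z, 0 <= y <= d -> 0 <= z <= d -> Rabs (g' y) <= M * g z.
Hypothesis g0_pos : 0 < g 0.

Let P := 1 + M * d.
Let gmin := g 0 / P.

Lemma P_ge1 : 1 <= P.
Proof. unfold P. nra. Qed.

Lemma gmin_pos : 0 < gmin.
Proof. apply Rdiv_lt_0_compat; [exact g0_pos|generalize P_ge1; lra]. Qed.

Lemma g_continuous y : continuous g y.
Proof. apply continuous_of_ex_derive. eexists. apply g_derive. Qed.

Lemma g_lower z : 0 <= z <= d -> gmin <= g z.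
Proof.
  intros Hz.
  assert (Hgz : 0 <= M * g z) by (eapply Rle_trans; [apply Rabs_pos|apply (g'_bound z z Hz Hz)]).
  assert (H := Rabs_sub_le_derive_bound g g' 0 z (M * g z) g_derive).
  rewrite Rminus_0_r, (Rabs_pos_eq z) in H by lra.
  assert (Hlip : Rabs (g z - g 0) <= M * g z * z).
  { apply H. intros y Hy. rewrite Rmin_left, Rmax_right in Hy by lra. apply g'_bound; lra. }
  apply Rabs_le_between in Hlip.
  unfold gmin, P. apply (Rmult_le_reg_r (1 + M * d)); [nra|].
  unfold Rdiv. rewrite Rmult_assoc, Rinv_l, Rmult_1_r by nra.
  assert (M * g z * z <= M * g z * d) by (apply Rmult_le_compat_l; lra). nra.
Qed.

Lemma continuous_prim y : continuous (fun z => RInt g 0 z) y.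
Proof. apply continuous_of_ex_derive. eexists. apply is_derive_RInt_from_0, g_continuous. Qed.

Lemma g_pos y : 0 <= y <= d -> 0 < g y.
Proof. intros Hy. apply Rlt_le_trans with gmin; [apply gmin_pos|apply g_lower, Hy]. Qed.

Lemma prim_lower y : 0 <= y <= d -> y * gmin <= RInt g 0 y.
Proof.
  intros Hy. rewrite <- (Rminus_0_r y) at 1. rewrite <- RInt_const_R.
  apply RInt_le; [lra| |apply ex_RInt_continuous_R; intros; apply g_continuous|].
  - apply ex_RInt_continuous_R. intros. apply continuous_const.
  - intros t Ht. apply g_lower. lra.
Qed.

Lemma Rabs_prim_sub_le t : 0 <= t <= d -> Rabs (RInt g 0 t - t * g t) <= M * g 0 * t * t.
Proof.
  intros Ht.
  assert (Hc : ex_RInt (fun _ => g t) 0 t) by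
    (apply ex_RInt_continuous_R; intros; apply continuous_const).
  assert (Hg : ex_RInt g 0 t) by (apply ex_RInt_continuous_R; intros; apply g_continuous).
  replace (t * g t) with (RInt (fun _ => g t) 0 t) by (rewrite RInt_const_R; simpl; ring).
  rewrite <- RInt_minus_R by assumption.
  replace (M * g 0 * t * t) with ((t - 0) * (M * g 0 * t)) by ring.
  apply abs_RInt_le_const; [lra|apply ex_RInt_minus_R; assumption|].
  intros s Hs.
  eapply Rle_trans; [apply (Rabs_sub_le_derive_bound g g' t s (M * g 0) g_derive)|].
  - intros y Hy. apply g'_bound; [|lra].
    rewrite Rmin_right, Rmax_left in Hy by lra. lra.
  - apply Rmult_le_compat_l; [eapply Rle_trans; [apply Rabs_pos|apply (g'_bound 0 0)]; lra|].
    rewrite Rabs_left1 by lra. lra.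
Qed.

Lemma Rabs_sin_prim_quot_sub_le t : 0 <= t <= d ->
  Rabs (sin_prim_quot g t - sinc (RInt g 0 t) * g t) <= M * P.
Proof.
  intros Ht.
  assert (HMP : 0 <= M * P) by (apply Rmult_le_pos; [exact M_ge0|generalize P_ge1; lra]).
  destruct (Req_dec t 0) as [->|Ht0].
  - unfold sin_prim_quot, sinc, quot0. rewrite RInt_point_R.
    destruct (Req_EM_T 0 0) as [_|]; [|contradiction].
    rewrite Rmult_1_l, Rminus_diag, Rabs_R0. exact HMP.
  - set (G := RInt g 0 t).
    assert (HtG : t * gmin <= G) by (apply prim_lower; exact Ht).
    assert (Hgm := gmin_pos).
    assert (HG : 0 < G) by nra.
    assert (E : sin_prim_quot g t - sinc G * g t = sin G * (G - t * g t) / (t * G)).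
    { unfold sin_prim_quot, sinc, quot0.
      destruct (Req_EM_T t 0); [contradiction|]. destruct (Req_EM_T G 0); [lra|].
      fold G. field. split; lra. }
    rewrite E. unfold Rdiv. rewrite !Rabs_mult, (Rabs_pos_eq (/ _))
      by (apply Rlt_le, Rinv_0_lt_compat; nra).
    apply (Rmult_le_reg_r (t * G)); [nra|].
    rewrite Rmult_assoc, Rinv_l, Rmult_1_r by nra.
    assert (Hsin : Rabs (sin G) <= 1) by apply Rabs_le, SIN_bound.
    assert (Hprim := Rabs_prim_sub_le t Ht). fold G in Hprim.
    assert (Hg0 : M * g 0 = M * P * gmin) by (unfold gmin; field; generalize P_ge1; lra).
    assert (M * P * (t * (t * gmin)) <= M * P * (t * G)) by
      (apply Rmult_le_compat_l; [exact HMP|apply Rmult_le_compat_l; lra]).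
    assert (0 <= Rabs (G - t * g t)) by apply Rabs_pos.
    nra.
Qed.

Lemma Rabs_RInt_sin_prim_quot_head eps : 0 < eps <= d ->
  Rabs (RInt (sin_prim_quot g) 0 eps - Si (RInt g 0 eps)) <= eps * (M * P).
Proof.
  intros Heps.
  set (h y := sinc (RInt g 0 y) * g y).
  assert (Hh : forall y, continuous h y).
  { intros y. apply continuous_mult_R; [|apply g_continuous].
    apply continuous_comp_R; [apply continuous_prim|apply continuous_sinc]. }
  assert (HSi : RInt h 0 eps = Si (RInt g 0 eps) :> R).
  { rewrite (RInt_derive_R (fun y => Si (RInt g 0 y))).
    - rewrite RInt_point_R. unfold Si at 2. rewrite RInt_point_R. ring.
    - intros y _. unfold h. rewrite Rmult_comm. apply is_derive_comp_R.
      + apply is_derive_RInt_from_0, continuous_sinc.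
      + apply is_derive_RInt_from_0, g_continuous.
    - intros y _. apply Hh. }
  rewrite <- HSi, <- RInt_minus_R.
  - replace eps with (eps - 0) at 2 by ring.
    apply abs_RInt_le_const; [lra| |].
    + apply ex_RInt_minus_R; [apply ex_RInt_sin_prim_quot, g_continuous|].
      apply ex_RInt_continuous_R; intros; apply Hh.
    + intros t Ht. apply Rabs_sin_prim_quot_sub_le. lra.
  - apply ex_RInt_sin_prim_quot, g_continuous.
  - apply ex_RInt_continuous_R; intros; apply Hh.
Qed.

(* Integration by parts on [[eps, d]]: [sin (G y) / y = F' y - k y]. *)
Let F y := - cos (RInt g 0 y) / (y * g y).
Let k y := cos (RInt g 0 y) * (g y + y * g' y) / (y * g y) ^ 2.

Lemma is_derive_by_parts y : 0 < y <= d -> is_derive F y (sin (RInt g 0 y) / y + k y).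
Proof.
  intros Hy. assert (Hgy : 0 < g y) by (apply g_pos; lra).
  assert (Hcos : is_derive (fun z => - cos (RInt g 0 z)) y (g y * sin (RInt g 0 y))).
  { apply (is_derive_comp_R (fun z => - cos z)); [|apply is_derive_RInt_from_0, g_continuous].
    auto_derive; auto. ring. }
  assert (Hprod : is_derive (fun z => z * g z) y (1 * g y + y * g' y)).
  { apply is_derive_mult_R; [apply (is_derive_id (K := R_AbsRing))|apply g_derive]. }
  assert (Hinv := is_derive_inv _ _ _ Hprod ltac:(nra)).
  assert (H := is_derive_mult_R _ _ y _ _ Hcos Hinv).
  replace (sin (RInt g 0 y) / y + k y) with
    (g y * sin (RInt g 0 y) * / (y * g y)
     + - cos (RInt g 0 y) * (- (1 * g y + y * g' y) / (y * g y) ^ 2)).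
  - exact H.
  - unfold k. field. lra.
Qed.

Lemma continuous_by_parts_remainder y : 0 < y <= d -> continuous k y.
Proof.
  intros Hy. assert (Hgy : 0 < g y) by (apply g_pos; lra).
  apply continuous_mult_R.
  - apply continuous_mult_R.
    + apply continuous_comp_R; [apply continuous_prim|].
      apply continuous_of_ex_derive; auto_derive; auto.
    + apply continuous_plus_R; [apply g_continuous|].
      apply continuous_mult_R; [apply continuous_id|apply g'_continuous].
  - apply continuous_Rinv_comp; [|apply pow_nonzero; nra].
    apply (continuous_comp_R (fun z => z * g z) (fun u => u ^ 2)).
    + apply continuous_mult_R; [apply continuous_id|apply g_continuous].
    + apply continuous_of_ex_derive; auto_derive; auto.
Qed.

Lemma continuous_sin_div_id y : 0 < y -> continuous (fun z => sin (RInt g 0 z) / z) y.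
Proof.
  intros Hy. apply continuous_mult_R.
  - apply continuous_comp_R; [apply continuous_prim|].
    apply continuous_of_ex_derive; auto_derive; auto.
  - apply continuous_Rinv. lra.
Qed.

Lemma RInt_sin_prim_quot_by_parts eps : 0 < eps <= d ->
  RInt (sin_prim_quot g) eps d = F d - F eps - RInt k eps d :> R.
Proof.
  intros Heps.
  assert (Hsum : RInt (fun y => sin (RInt g 0 y) / y + k y) eps d = F d - F eps :> R).
  { apply RInt_derive_R; intros y Hy; rewrite Rmin_left, Rmax_right in Hy by lra.
    - apply is_derive_by_parts. lra.
    - apply continuous_plus_R; [apply continuous_sin_div_id; lra|].
      apply continuous_by_parts_remainder. lra. }
  rewrite <- Hsum, <- RInt_minus_R.
  - apply RInt_ext. intros y Hy. rewrite Rmin_left, Rmax_right in Hy by lra.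
    unfold sin_prim_quot, quot0. destruct (Req_EM_T y 0); [lra|]. symmetry; apply Rplus_minus_r.
  - apply ex_RInt_continuous_R. intros y Hy. rewrite Rmin_left, Rmax_right in Hy by lra.
    apply continuous_plus_R; [apply continuous_sin_div_id; lra|].
    apply continuous_by_parts_remainder. lra.
  - apply ex_RInt_continuous_R. intros y Hy. rewrite Rmin_left, Rmax_right in Hy by lra.
    apply continuous_by_parts_remainder. lra.
Qed.

Lemma Rabs_by_parts_boundary_le eps y : 0 < eps <= y -> y <= d ->
  Rabs (F y) <= 1 / (eps * gmin).
Proof.
  intros Hy Hyd. assert (Hgm := gmin_pos). assert (Hgy : gmin <= g y) by (apply g_lower; lra).
  unfold F, Rdiv. rewrite Rabs_mult, Rabs_Ropp, Rabs_inv, (Rabs_pos_eq (y * g y)) by nra.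
  rewrite Rmult_1_l. apply Rle_trans with (1 * / (y * g y)).
  - apply Rmult_le_compat_r; [apply Rlt_le, Rinv_0_lt_compat; nra|].
    apply Rabs_le, COS_bound.
  - rewrite Rmult_1_l. apply Rinv_le_contravar; nra.
Qed.

Lemma Rabs_by_parts_remainder_le eps y : 0 < eps <= y -> y <= d ->
  Rabs (k y) <= P / (eps ^ 2 * gmin).
Proof.
  intros Hy Hyd. assert (Hgm := gmin_pos). assert (Hgy : gmin <= g y) by (apply g_lower; lra).
  assert (Hg'y : Rabs (g' y) <= M * g y) by (apply g'_bound; lra).
  assert (Hsum : Rabs (g y + y * g' y) <= g y * P).
  { eapply Rle_trans; [apply Rabs_triang|].
    rewrite Rabs_mult, (Rabs_pos_eq y), (Rabs_pos_eq (g y)) by lra.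
    unfold P. assert (y * Rabs (g' y) <= d * (M * g y)).
    { apply Rmult_le_compat; [lra|apply Rabs_pos|lra|exact Hg'y]. }
    nra. }
  unfold k, Rdiv. rewrite !Rabs_mult, Rabs_inv, (Rabs_pos_eq ((y * g y) ^ 2)) by nra.
  apply Rle_trans with (g y * P * / (y * g y) ^ 2).
  - apply Rmult_le_compat_r; [apply Rlt_le, Rinv_0_lt_compat, pow_lt; nra|].
    assert (Rabs (cos (RInt g 0 y)) <= 1) by apply Rabs_le, COS_bound.
    assert (0 <= Rabs (g y + y * g' y)) by apply Rabs_pos. nra.
  - replace (g y * P * / (y * g y) ^ 2) with (P * / (y ^ 2 * g y)) by (field; nra).
    apply Rmult_le_compat_l; [generalize P_ge1; lra|].
    apply Rinv_le_contravar; [apply Rmult_lt_0_compat; [apply pow_lt; lra|exact Hgm]|].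
    apply Rmult_le_compat; [apply pow_le; lra|lra|apply pow_incr; lra|exact Hgy].
Qed.

Lemma Rabs_RInt_sin_prim_quot_tail eps : 0 < eps <= d ->
  Rabs (RInt (sin_prim_quot g) eps d) <= 2 / (eps * gmin) + d * P / (eps ^ 2 * gmin).
Proof.
  intros Heps. assert (Hgm := gmin_pos).
  rewrite RInt_sin_prim_quot_by_parts by exact Heps.
  assert (Hd := Rabs_by_parts_boundary_le eps d Heps (Rle_refl d)).
  assert (He := Rabs_by_parts_boundary_le eps eps (conj (proj1 Heps) (Rle_refl eps)) (proj2 Heps)).
  assert (Hk : Rabs (RInt k eps d) <= (d - eps) * (P / (eps ^ 2 * gmin))).
  { apply abs_RInt_le_const; [lra| |].
    - apply ex_RInt_continuous_R. intros y Hy. rewrite Rmin_left, Rmax_right in Hy by lra.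
      apply continuous_by_parts_remainder. lra.
    - intros y Hy. apply Rabs_by_parts_remainder_le; lra. }
  assert (Hdk : (d - eps) * (P / (eps ^ 2 * gmin)) <= d * P / (eps ^ 2 * gmin)).
  { unfold Rdiv. rewrite <- Rmult_assoc. apply Rmult_le_compat_r.
    - apply Rlt_le, Rinv_0_lt_compat, Rmult_lt_0_compat; [apply pow_lt; lra|exact Hgm].
    - generalize P_ge1. nra. }
  assert (E : 2 / (eps * gmin) = 1 / (eps * gmin) + 1 / (eps * gmin)) by (field; nra).
  apply Rabs_le_between in Hd, He, Hk. apply Rabs_le. lra.
Qed.

Lemma Rabs_RInt_sin_prim_quot_sub_PI2_le eps : 0 < eps <= d ->
  Rabs (RInt (sin_prim_quot g) 0 d - PI / 2) <=
    eps * (M * (1 + M * d)) + (4 / eps + d * (1 + M * d) / eps ^ 2) * ((1 + M * d) / g 0).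
Proof.
  intros Heps. assert (Hgm := gmin_pos).
  assert (Hint : forall a b, ex_RInt (sin_prim_quot g) a b)
    by (intros; apply ex_RInt_sin_prim_quot, g_continuous).
  assert (Hsplit : RInt (sin_prim_quot g) 0 eps + RInt (sin_prim_quot g) eps d
                   = RInt (sin_prim_quot g) 0 d)
    by exact (RInt_Chasles _ 0 eps d (Hint _ _) (Hint _ _)).
  assert (HG : eps * gmin <= RInt g 0 eps) by (apply prim_lower; lra).
  assert (Hhead := Rabs_RInt_sin_prim_quot_head eps Heps).
  assert (HSi := Rabs_Si_sub_PI2_le (RInt g 0 eps) ltac:(nra)).
  assert (HSi' : 2 / RInt g 0 eps <= 2 / (eps * gmin)).
  { apply Rmult_le_compat_l; [lra|]. apply Rinv_le_contravar; nra. }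
  assert (Htail := Rabs_RInt_sin_prim_quot_tail eps Heps).
  assert (E : (4 / eps + d * P / eps ^ 2) * (P / g 0) =
              2 / (eps * gmin) + 2 / (eps * gmin) + d * P / (eps ^ 2 * gmin)).
  { unfold gmin. field. generalize P_ge1. lra. }
  fold P. rewrite E, <- Hsplit.
  apply Rabs_le_between in Hhead, HSi, Htail. apply Rabs_le. lra.
Qed.

End SinPrimitiveQuotient.

Lemma psum_le (a b : nat -> R) n : (forall k, a k <= b k) -> psum a n <= psum b n.
Proof. intros H. induction n as [|n IH]; simpl; [lra|]. generalize (H n). lra. Qed.

Lemma Rabs_psum_le (a : nat -> R) n : Rabs (psum a n) <= psum (fun k => Rabs (a k)) n.
Proof.
  induction n as [|n IH]; simpl; [rewrite Rabs_R0; lra|].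
  eapply Rle_trans; [apply Rabs_triang|lra].
Qed.

Lemma psum_mult_l c (a : nat -> R) n : c * psum a n = psum (fun k => c * a k) n.
Proof. induction n as [|n IH]; simpl; [ring|]. rewrite <- IH. ring. Qed.

Lemma psum_pos (a : nat -> R) n : (forall k, 0 < a k) -> (1 <= n)%nat -> 0 < psum a n.
Proof.
  intros Ha Hn. induction n as [|n IH]; [lia|]. simpl.
  destruct n as [|n]; simpl in *; [generalize (Ha 0%nat); lra|].
  generalize (IH ltac:(lia)) (Ha (S n)). lra.
Qed.

Lemma is_derive_psum (f df : nat -> R -> R) n u :
  (forall k, is_derive (f k) u (df k u)) ->
  is_derive (fun v => psum (fun k => f k v) n) u (psum (fun k => df k u) n).
Proof.
  intros Hf. induction n as [|n IH]; simpl.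
  - apply (is_derive_const (K := R_AbsRing) (V := R_NormedModule)).
  - apply (is_derive_plus (K := R_AbsRing) (V := R_NormedModule)); [exact IH|apply Hf].
Qed.

Lemma continuous_psum (f : nat -> R -> R) n u :
  (forall k, continuous (f k) u) -> continuous (fun v => psum (fun k => f k v) n) u.
Proof.
  intros Hf. induction n as [|n IH]; simpl.
  - apply continuous_const.
  - apply continuous_plus_R; [exact IH|apply Hf].
Qed.

Lemma Un_cv_of_uniform_bound (u v : nat -> R) (l A d : R) :
  0 < d -> 0 <= A -> cv_infty v ->
  (forall eps, 0 < eps <= d ->
     exists B, forall n, (1 <= n)%nat -> Rabs (u n - l) <= eps * A + B / v n) ->
  Un_cv u l.
Proof.
  intros Hd HA Hv Hbound eta Heta.
  set (eps := Rmin d (eta / (2 * (A + 1)))).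
  assert (Heps : 0 < eps <= d).
  { split; [apply Rmin_glb_lt; [exact Hd|apply Rdiv_lt_0_compat; lra]|apply Rmin_l]. }
  assert (HepsA : eps * A < eta / 2).
  { apply Rle_lt_trans with (eta / (2 * (A + 1)) * A).
    - apply Rmult_le_compat_r; [exact HA|apply Rmin_r].
    - apply (Rmult_lt_reg_r (2 * (A + 1))); [lra|].
      replace (eta / (2 * (A + 1)) * A * (2 * (A + 1))) with (eta * A) by (field; lra).
      nra. }
  destruct (Hbound eps Heps) as [B HB].
  destruct (Hv (2 * Rabs B / eta)) as [N HN].
  exists (max N 1). intros n Hn. unfold R_dist.
  assert (Hvn : 2 * Rabs B / eta < v n) by (apply HN; lia).
  assert (HBv : B / v n < eta / 2).
  { assert (0 <= 2 * Rabs B / eta) by (apply Rle_mult_inv_pos; [generalize (Rabs_pos B)|]; lra).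
    apply (Rmult_lt_reg_r (v n)); [lra|].
    unfold Rdiv at 1. rewrite Rmult_assoc, Rinv_l, Rmult_1_r by lra.
    apply Rle_lt_trans with (Rabs B); [apply Rle_abs|].
    apply (Rmult_lt_reg_l (2 / eta)); [apply Rdiv_lt_0_compat; lra|].
    replace (2 / eta * Rabs B) with (2 * Rabs B / eta) by (field; lra).
    replace (2 / eta * (eta / 2 * v n)) with (v n) by (field; lra). exact Hvn. }
  specialize (HB n ltac:(lia)). lra.
Qed.

Definition poisson (r s u : R) : R := 2 * s / ((u - r) ^ 2 + s ^ 2).
Definition poisson' (r s u : R) : R := - (2 * s) * (2 * (u - r)) / ((u - r) ^ 2 + s ^ 2) ^ 2.

Lemma poisson_denom_pos r s u : 0 < s -> 0 < (u - r) ^ 2 + s ^ 2.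
Proof. intros Hs. generalize (pow2_ge_0 (u - r)). nra. Qed.

Lemma is_derive_poisson r s u : 0 < s -> is_derive (poisson r s) u (poisson' r s u).
Proof.
  intros Hs. assert (HD := poisson_denom_pos r s u Hs).
  unfold poisson, poisson'. auto_derive; [nra|]. field. lra.
Qed.

Lemma continuous_poisson' r s u : 0 < s -> continuous (poisson' r s) u.
Proof.
  intros Hs. assert (HD := poisson_denom_pos r s u Hs).
  apply continuous_of_ex_derive. unfold poisson'. auto_derive. nra.
Qed.

Lemma Rabs_poisson'_le r s u : 0 < s -> Rabs (poisson' r s u) <= 2 * / s ^ 2.
Proof.
  intros Hs. assert (HD := poisson_denom_pos r s u Hs).
  set (w := u - r) in *. unfold poisson'. fold w.
  unfold Rdiv. rewrite Rabs_mult, Rabs_inv, (Rabs_pos_eq (_ ^ 2)) by (apply pow_le; lra).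
  assert (Hnum : Rabs (- (2 * s) * (2 * w)) <= 2 * (w ^ 2 + s ^ 2)).
  { rewrite Rabs_mult, Rabs_Ropp, !Rabs_mult, (Rabs_pos_eq 2), (Rabs_pos_eq s) by lra.
    rewrite <- (pow2_abs w). generalize (pow2_ge_0 (s - Rabs w)). nra. }
  apply Rle_trans with (2 * (w ^ 2 + s ^ 2) * / (w ^ 2 + s ^ 2) ^ 2).
  - apply Rmult_le_compat_r; [apply Rlt_le, Rinv_0_lt_compat, pow_lt; lra|exact Hnum].
  - replace (2 * (w ^ 2 + s ^ 2) * / (w ^ 2 + s ^ 2) ^ 2) with (2 * / (w ^ 2 + s ^ 2))
      by (field; lra).
    apply Rmult_le_compat_l; [lra|]. apply Rinv_le_contravar; [nra|].
    generalize (pow2_ge_0 w). lra.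
Qed.

Lemma poisson_lower r s u K : 0 < s -> 2 * u ^ 2 + 2 <= K ->
  2 / K * (Rabs s / (1 + (r ^ 2 + s ^ 2))) <= poisson r s u.
Proof.
  intros Hs HK. assert (HD := poisson_denom_pos r s u Hs).
  rewrite Rabs_pos_eq by lra.
  generalize (pow2_ge_0 u) (pow2_ge_0 r) (pow2_ge_0 s) (pow2_ge_0 (u + r)). intros Hu Hr Hs2 Hur.
  assert (HK0 : 0 < K) by lra.
  assert (Hden : (u - r) ^ 2 + s ^ 2 <= K * (1 + (r ^ 2 + s ^ 2))).
  { assert (0 <= (K - 2) * r ^ 2) by (apply Rmult_le_pos; lra).
    assert (0 <= (K - 1) * s ^ 2) by (apply Rmult_le_pos; lra). nra. }
  replace (2 / K * (s / (1 + (r ^ 2 + s ^ 2)))) with (2 * s / (K * (1 + (r ^ 2 + s ^ 2))))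
    by (field; lra).
  unfold poisson, Rdiv. apply Rmult_le_compat_l; [lra|]. apply Rinv_le_contravar; lra.
Qed.

Definition poisson_sum (re im : nat -> R) (n : nat) (u : R) : R :=
  psum (fun k => poisson (re k) (im k) u) n.
Definition poisson_sum' (re im : nat -> R) (n : nat) (u : R) : R :=
  psum (fun k => poisson' (re k) (im k) u) n.

Lemma Rint_eq_RInt f a b : ex_RInt f a b -> Rint f a b = RInt f a b.
Proof.
  intros H. unfold Rint.
  destruct (excluded_middle_informative (exists pr : Riemann_integrable f a b, True)) as [E|E].
  - symmetry. apply RInt_Reals.
  - exfalso. apply E. exists (ex_RInt_Reals_0 _ _ _ H). exact I.
Qed.

Section PoissonSum.

Variables (re im : nat -> R).
Hypothesis im_pos : forall k, 0 < im k.

Lemma is_derive_poisson_sum n u : is_derive (poisson_sum re im n) u (poisson_sum' re im n u).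
Proof.
  apply (is_derive_psum (fun k => poisson (re k) (im k)) (fun k => poisson' (re k) (im k))).
  intros k. apply is_derive_poisson, im_pos.
Qed.

Lemma continuous_poisson_sum n u : continuous (poisson_sum re im n) u.
Proof. apply continuous_of_ex_derive. eexists. apply is_derive_poisson_sum. Qed.

Lemma continuous_poisson_sum' n u : continuous (poisson_sum' re im n) u.
Proof.
  apply (continuous_psum (fun k => poisson' (re k) (im k))).
  intros k. apply continuous_poisson', im_pos.
Qed.

Lemma Rabs_poisson_sum'_le n u : Rabs (poisson_sum' re im n u) <= 2 * varsigma_n im n.
Proof.
  eapply Rle_trans; [apply Rabs_psum_le|].
  unfold varsigma_n. rewrite psum_mult_l. apply psum_le.
  intros k. apply Rabs_poisson'_le, im_pos.
Qed.

Lemma poisson_sum_lower n u K : 2 * u ^ 2 + 2 <= K ->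
  2 / K * sigma_n re im n <= poisson_sum re im n u.
Proof.
  intros HK. unfold sigma_n. rewrite psum_mult_l. apply psum_le.
  intros k. apply poisson_lower; [apply im_pos|exact HK].
Qed.

Lemma sigma_n_pos n : (1 <= n)%nat -> 0 < sigma_n re im n.
Proof.
  apply psum_pos. intros k. generalize (im_pos k) (pow2_ge_0 (re k)) (pow2_ge_0 (im k)).
  intros. apply Rdiv_lt_0_compat; [apply Rabs_pos_lt|]; lra.
Qed.

End PoissonSum.

Definition poisson_line (re im : nat -> R) (c x : R) (n : nat) (y : R) : R :=
  poisson_sum re im n (x + c * y).

Section Direction.

(* The direction [s] is [fun y => c * y] only propositionally, so that the lemmas below apply
   verbatim to the integrands with [mu_n _ _ _ y x] and [mu_n _ _ _ (- y) x]. *)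
Variables (re im : nat -> R) (c x : R) (s : R -> R).
Hypothesis im_pos : forall k, 0 < im k.
Hypothesis c_neq0 : c <> 0.
Hypothesis s_eq : forall y, s y = c * y.

Lemma is_derive_poisson_line n y :
  is_derive (poisson_line re im c x n) y (c * poisson_sum' re im n (x + c * y)).
Proof.
  apply (is_derive_comp_R (poisson_sum re im n) (fun y => x + c * y)).
  - apply is_derive_poisson_sum, im_pos.
  - auto_derive; auto. ring.
Qed.

Lemma continuous_poisson_line' n y :
  continuous (fun y => c * poisson_sum' re im n (x + c * y)) y.
Proof.
  apply continuous_mult_R; [apply continuous_const|].
  apply (continuous_comp_R (fun y => x + c * y)); [|apply continuous_poisson_sum', im_pos].
  apply continuous_of_ex_derive. auto_derive; auto.
Qed.

Lemma continuous_poisson_line n y : continuous (poisson_line re im c x n) y.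
Proof. apply continuous_of_ex_derive. eexists. apply is_derive_poisson_line. Qed.

Lemma y_mult_mu_n n y : y <> 0 -> y * mu_n re im n (s y) x = RInt (poisson_line re im c x n) 0 y.
Proof.
  intros Hy. rewrite s_eq. unfold mu_n.
  change (fun u => psum (fun k => 2 * im k / ((u - re k) ^ 2 + im k ^ 2)) n)
    with (poisson_sum re im n).
  assert (Hint : forall a b, ex_RInt (poisson_sum re im n) a b).
  { intros a b. apply ex_RInt_continuous_R. intros; apply continuous_poisson_sum, im_pos. }
  rewrite Rint_eq_RInt by apply Hint.
  assert (Hlin := RInt_comp_lin (V := R_CompleteNormedModule) (poisson_sum re im n) c x 0 y
                    (Hint _ _)).
  rewrite Rmult_0_r, Rplus_0_l, (Rplus_comm (c * y) x) in Hlin.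
  rewrite <- Hlin. unfold scal; simpl; unfold mult; simpl.
  rewrite (RInt_ext _ (fun t => c * poisson_line re im c x n t)).
  2:{ intros t _. unfold poisson_line. rewrite (Rplus_comm x). reflexivity. }
  assert (Hline : ex_RInt (poisson_line re im c x n) 0 y).
  { apply ex_RInt_continuous_R. intros; apply continuous_poisson_line. }
  rewrite (RInt_scal (V := R_CompleteNormedModule) _ 0 y c Hline :
    RInt (fun t => c * poisson_line re im c x n t) 0 y = c * RInt (poisson_line re im c x n) 0 y).
  field. split; assumption.
Qed.

Lemma sin_mu_n_div_eq n y : y <> 0 ->
  sin (y * mu_n re im n (s y) x) / y = sin_prim_quot (poisson_line re im c x n) y.
Proof.
  intros Hy. unfold sin_prim_quot, quot0. destruct (Req_EM_T y 0); [contradiction|].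
  rewrite y_mult_mu_n by exact Hy. reflexivity.
Qed.

Lemma ex_RInt_sin_mu_n n delta : 0 < delta ->
  ex_RInt (fun y => sin (y * mu_n re im n (s y) x) / y) 0 delta.
Proof.
  intros Hd. apply (ex_RInt_ext (V := R_NormedModule) (sin_prim_quot (poisson_line re im c x n))).
  - intros y Hy. rewrite Rmin_left, Rmax_right in Hy by lra.
    symmetry. apply sin_mu_n_div_eq. lra.
  - apply ex_RInt_sin_prim_quot. apply continuous_poisson_line.
Qed.

Lemma Rint_sin_mu_n_eq n delta : 0 < delta ->
  Rint (fun y => sin (y * mu_n re im n (s y) x) / y) 0 delta =
  RInt (sin_prim_quot (poisson_line re im c x n)) 0 delta.
Proof.
  intros Hd. rewrite Rint_eq_RInt by (apply ex_RInt_sin_mu_n, Hd).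
  apply RInt_ext. intros y Hy. rewrite Rmin_left, Rmax_right in Hy by lra.
  apply sin_mu_n_div_eq. lra.
Qed.

Lemma poisson_line_lower n delta z : 0 <= z <= delta ->
  2 / (2 * (Rabs x + Rabs c * delta) ^ 2 + 2) * sigma_n re im n <= poisson_line re im c x n z.
Proof.
  intros Hz. apply poisson_sum_lower; [exact im_pos|].
  assert (Habs : Rabs (x + c * z) <= Rabs x + Rabs c * delta).
  { eapply Rle_trans; [apply Rabs_triang|]. rewrite Rabs_mult, (Rabs_pos_eq z) by lra.
    generalize (Rabs_pos c). nra. }
  rewrite <- (pow2_abs (x + c * z)). generalize (Rabs_pos (x + c * z)). nra.
Qed.

Lemma Rabs_poisson_line'_le n C y : (1 <= n)%nat -> varsigma_n im n <= C * sigma_n re im n ->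
  Rabs (c * poisson_sum' re im n (x + c * y)) <= 2 * Rabs c * Rabs C * sigma_n re im n.
Proof.
  intros Hn Hratio. rewrite Rabs_mult.
  assert (Hsig := sigma_n_pos re im im_pos n Hn).
  assert (Hd := Rabs_poisson_sum'_le re im im_pos n (x + c * y)).
  assert (C * sigma_n re im n <= Rabs C * sigma_n re im n)
    by (apply Rmult_le_compat_r; [lra|apply Rle_abs]).
  generalize (Rabs_pos c). nra.
Qed.

Lemma Un_cv_Rint_sin_mu_n C delta :
  cv_infty (sigma_n re im) ->
  (forall n, (1 <= n)%nat -> varsigma_n im n / sigma_n re im n <= C) ->
  0 < delta ->
  Un_cv (fun n => Rint (fun y => sin (y * mu_n re im n (s y) x) / y) 0 delta) (PI / 2).
Proof.
  intros Hinf Hratio Hd.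
  set (K := 2 * (Rabs x + Rabs c * delta) ^ 2 + 2).
  assert (HK : 2 <= K) by (unfold K; generalize (pow2_ge_0 (Rabs x + Rabs c * delta)); lra).
  set (M := Rabs c * Rabs C * K).
  assert (HM : 0 <= M).
  { unfold M. generalize (Rabs_pos c) (Rabs_pos C). intros.
    apply Rmult_le_pos; [apply Rmult_le_pos|]; lra. }
  set (P := 1 + M * delta).
  assert (HP : 1 <= P) by (unfold P; nra).
  apply (Un_cv_of_uniform_bound _ (sigma_n re im) _ (M * P) delta Hd); [nra|exact Hinf|].
  intros eps Heps.
  set (W := (4 / eps + delta * P / eps ^ 2) * P).
  assert (HW : 0 <= W).
  { unfold W. apply Rmult_le_pos; [|lra]. apply Rplus_le_le_0_compat.
    - apply Rlt_le, Rdiv_lt_0_compat; lra.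
    - apply Rle_mult_inv_pos; [nra|apply pow_lt; lra]. }
  exists (W * (K / 2)). intros n Hn.
  assert (Hsig := sigma_n_pos re im im_pos n Hn).
  assert (Hvar : varsigma_n im n <= C * sigma_n re im n).
  { specialize (Hratio n Hn). unfold Rdiv in Hratio.
    apply (Rmult_le_compat_r (sigma_n re im n)) in Hratio; [|lra].
    rewrite Rmult_assoc, Rinv_l, Rmult_1_r in Hratio by lra. exact Hratio. }
  set (g := poisson_line re im c x n).
  assert (Hlow : forall z, 0 <= z <= delta -> 2 / K * sigma_n re im n <= g z)
    by (intros z Hz; apply poisson_line_lower, Hz).
  assert (HKs : 0 < 2 / K * sigma_n re im n)
    by (apply Rmult_lt_0_compat; [apply Rdiv_lt_0_compat|]; lra).
  assert (Hg0 : 0 < g 0) by (apply Rlt_le_trans with (2 / K * sigma_n re im n); [|apply Hlow]; lra).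
  assert (Hbound : forall y z, 0 <= y <= delta -> 0 <= z <= delta ->
            Rabs (c * poisson_sum' re im n (x + c * y)) <= M * g z).
  { intros y z _ Hz. eapply Rle_trans; [apply (Rabs_poisson_line'_le n C y Hn Hvar)|].
    replace (2 * Rabs c * Rabs C * sigma_n re im n) with (M * (2 / K * sigma_n re im n))
      by (unfold M; field; lra).
    apply Rmult_le_compat_l; [exact HM|apply Hlow, Hz]. }
  rewrite Rint_sin_mu_n_eq by exact Hd.
  eapply Rle_trans.
  { exact (Rabs_RInt_sin_prim_quot_sub_PI2_le g _ delta M (is_derive_poisson_line n)
             (continuous_poisson_line' n) Hd HM Hbound Hg0 eps Heps). }
  fold P. apply Rplus_le_compat_l.
  replace (W * (K / 2) / sigma_n re im n) with (W * / (2 / K * sigma_n re im n)) by (field; lra).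
  unfold Rdiv. rewrite <- Rmult_assoc. apply Rmult_le_compat_l; [exact HW|].
  apply Rinv_le_contravar; [exact HKs|apply Hlow; lra].
Qed.

End Direction.

Theorem lemma7 (re im : nat -> R) (C : R) :
  (forall k, 0 < im k) ->
  no_real_limit_points re im ->
  cv_infty (sigma_n re im) ->
  (forall n, (1 <= n)%nat -> varsigma_n im n / sigma_n re im n <= C) ->
  forall (delta x : R), 0 < delta ->
    (forall n, inhabited (Riemann_integrable (fun y => sin (y * mu_n re im n y x) / y) 0 delta)) /\
    (forall n, inhabited (Riemann_integrable (fun y => sin (y * mu_n re im n (- y) x) / y) 0 delta)) /\
    Un_cv (fun n => Rint (fun y => sin (y * mu_n re im n y x) / y) 0 delta) (PI / 2) /\
    Un_cv (fun n => Rint (fun y => sin (y * mu_n re im n (- y) x) / y) 0 delta) (PI / 2).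
Proof.
  intros Him _ Hinf Hratio delta x Hd.
  assert (Hid : forall y, y = 1 * y) by (intros; ring).
  assert (Hopp : forall y, - y = -1 * y) by (intros; ring).
  split; [|split; [|split]].
  - intros n. constructor. apply ex_RInt_Reals_0.
    apply (ex_RInt_sin_mu_n re im 1 x (fun y => y)); auto with real.
  - intros n. constructor. apply ex_RInt_Reals_0.
    apply (ex_RInt_sin_mu_n re im (-1) x Ropp); auto with real.
  - apply (Un_cv_Rint_sin_mu_n re im 1 x (fun y => y) Him) with C; auto with real.
  - apply (Un_cv_Rint_sin_mu_n re im (-1) x Ropp Him) with C; auto with real.
Qed.
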